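(* For every positive integer $n$ and every string $u$ of length $n$ over a finite alphabet, the sum of the exponents of all cubic runs in $u$ is less than $2.5\,n$.
   Context: For a word $u=u_1\cdots u_m$, the (shortest) period is the smallest positive integer $p$ with $u_i=u_{i+p}$ for all $1\le i\le m-p$; $u[i..j]=u_i\cdots u_j$. A run in $u$ is an interval $[i..j]$ such that the period $p$ of $u[i..j]$ satisfies $2p\le j-i+1$, and $u[i-1]\ne u[i+p-1]$ (or $i=1$) and $u[j-p+1]\ne u[j+1]$ (or $j=|u|$). Its exponent is $(j-i+1)/p$. A cubic run is a run $[i..j]$ whose shortest period $p$ satisfies $3p\le j-i+1$. *)

From mathcomp Require Import all_boot all_order all_algebra.
Set Implicit Arguments. Unset Strict Implicit. Unset Printing Implicit Defensive.
Import GRing.Theory Num.Theory.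

(* Words are sequences over a finite alphabet T; positions are 1-indexed as in
   the paper: letter u_k is [nth x0 u k.-1] (x0 irrelevant for 1 <= k <= |u|). *)
Section Runs.
Variable T : finType.

Definition letter (u : seq T) (k : nat) : option T :=
  if k is k'.+1 then nth None (map Some u) k' else None.

Definition is_periodb (u : seq T) (i j p : nat) : bool :=
  (0 < p) && all (fun k => letter u k == letter u (k + p)) (index_iota i (j - p).+1).

(* shortest period of u[i..j]; (j - i + 1) is always a period so this is the
   smallest positive p with the period property *)
Definition period (u : seq T) (i j : nat) : nat :=
  head (j - i).+1 [seq p <- iota 1 (j - i).+1 | is_periodb u i j p].

Definition is_run (u : seq T) (i j : nat) : bool :=
  let p := period u i j in
  [&& 1 <= i, i <= j, j <= size u, 2 * p <= j - i + 1,
      (i == 1) || (letter u i.-1 != letter u (i + p - 1)) &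
      (j == size u) || (letter u (j - p + 1) != letter u j.+1)].

Definition is_cubic_run (u : seq T) (i j : nat) : bool :=
  is_run u i j && (3 * period u i j <= j - i + 1).

Definition exponent (u : seq T) (i j : nat) : rat :=
  ((j - i + 1)%:R / (period u i j)%:R)%R.

Definition cubic_exp_sum (u : seq T) : rat :=
  (\sum_(i < (size u).+1) \sum_(j < (size u).+1 | is_cubic_run u i j)
      exponent u i j)%R.
End Runs.

From mathcomp Require Import all_boot all_order all_algebra.
From mathcomp Require Import zify ring.
Import Order.TTheory GRing.Theory Num.Theory.
Set Implicit Arguments. Unset Strict Implicit. Unset Printing Implicit Defensive.

(* For a cubic run of period p, order the letters (by enum_rank or by its
   reverse) so that the letter following the run is smaller than the letter one
   period before it, and call a position a > i a Lyndon root of the run if the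
   factor of length p at a lies in the run and is a Lyndon word for that order.
   A factor minimal over one period is smaller than its proper rotations, which
   are factors of the run too and differ from it because p is the least period,
   so it is a Lyndon word; its shifts by multiples of p give floor(L/p) - 1
   roots in a run of length L, and L/p <= 5/2 (floor(L/p) - 1) as
   floor(L/p) >= 3.  No position is a root of two runs: at a root the letter is
   below the previous one in the run's order (equal if p = 1), which separates
   runs with opposite orders; with the same order, a factor of length greater
   than p starting in the run of period p is never Lyndon (inside the run it
   has a border, across the mismatch its suffix at offset p is smaller); and
   two runs of the same period sharing a whole period coincide.  Since roots
   lie in [2..n], the exponents sum to at most 5/2 (n - 1). *)

Local Notation "s <lex t" := ((s : seqlexi _) < (t : seqlexi _))%O
  (at level 70, no associativity).

Section Lyndon.
Variables (disp : Order.disp_t) (A : orderType disp).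
Implicit Types (s w x y : seq A).

Lemma ltxi_catl s x y : (s ++ x <lex s ++ y) = (x <lex y).
Proof. by elim: s => //= a s IH; rewrite eqhead_ltxiE. Qed.

Lemma ltxi_cat_eqsize x1 y1 x2 y2 :
  size x1 = size y1 -> x1 <lex y1 -> x1 ++ x2 <lex y1 ++ y2.
Proof.
elim: x1 y1 => [|a x1 IH] [|b y1] //= [/IH {}IH].
by rewrite !ltxi_cons => /andP[-> /implyP lt_x1y1]; apply/implyP => /lt_x1y1/IH.
Qed.

Lemma ltxi_cat_prefix s x : (s ++ x <lex s) = false.
Proof. by elim: s => [|a s IH]; rewrite ?ltxis0 //= eqhead_ltxiE. Qed.

Definition lyndon w := all (fun k => w <lex drop k w) (iota 1 (size w).-1).

Lemma lyndon_first_lt_last a w z : lyndon (a :: w ++ [:: z]) -> (a < z)%O.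
Proof.
have z_in : (size w).+1 \in iota 1 (size (a :: w ++ [:: z])).-1.
  by rewrite /= size_cat addn1 mem_iota add1n ltnSn.
move=> /allP /(_ _ z_in); rewrite -cat_cons drop_size_cat //.
by rewrite ltxi_cons ltxis0 implybF ltNge => /andP[].
Qed.

Lemma lyndon_of_lt_rot w :
  (forall k, 0 < k < size w -> w <lex rot k w) -> lyndon w.
Proof.
move=> lt_rot; apply/allP => k; rewrite mem_iota add1n => /andP[k_gt0 k_lt].
have {}k_lt : k < size w by lia.
set n := size w in k_lt; set D := drop k w; set X := take (n - k) w.
have size_DX : size D = size X by rewrite size_drop size_takel ?leq_subr.
have w_lt_rot_k := lt_rot k (introT andP (conj k_gt0 k_lt)).
have w_XY : w = X ++ drop (n - k) w by rewrite cat_take_drop.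
have [X_D | X_neq_D] := eqVneq X D.
  have w_lt_rot : w <lex rot (n - k) w by apply: lt_rot; lia.
  have : rot (n - k) w <lex w.
    have w_PD : w = take k w ++ D by rewrite cat_take_drop.
    rewrite /rot -/X X_D [X in _ <lex X]w_PD.
    apply: ltxi_cat_eqsize; first by rewrite size_drop size_takel ?subKn // ltnW.
    by move: w_lt_rot_k; rewrite /rot -/D {1}w_XY X_D ltxi_catl.
  by rewrite lt_gtF.
have /orP[X_lt_D | D_lt_X] := @lt_total _ (seqlexi A) X D X_neq_D.
  by rewrite w_XY -[D]cats0; apply: ltxi_cat_eqsize.
have : rot k w <lex w by rewrite /rot -/D w_XY; apply: ltxi_cat_eqsize.
by rewrite lt_gtF.
Qed.
End Lyndon.

Section Windows.
Variables (X : Type) (f : nat -> X).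

Definition win a m := map f (iota a m).

Lemma size_win a m : size (win a m) = m.
Proof. by rewrite size_map size_iota. Qed.

Lemma winD a m1 m2 : win a (m1 + m2) = win a m1 ++ win (a + m1) m2.
Proof. by rewrite /win iotaD map_cat. Qed.

Lemma win_cons a m : win a m.+1 = f a :: win a.+1 m.
Proof. by []. Qed.

Lemma drop_win a m k : drop k (win a m) = win (a + k) (m - k).
Proof. by rewrite /win -map_drop drop_iota. Qed.

Lemma take_win a m k : k <= m -> take k (win a m) = win a k.
Proof. by move=> le_km; rewrite /win -map_take take_iota (minn_idPl le_km). Qed.

Lemma nth_win x a m s : s < m -> nth x (win a m) s = f (a + s).
Proof. by move=> lt_sm; rewrite (nth_map 0) ?size_iota // nth_iota. Qed.

Definition periodic i j p := forall k, i <= k -> k + p <= j -> f k = f (k + p).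

Lemma periodic_mul i j p m : periodic i j p -> periodic i j (m * p).
Proof.
move=> per_p; elim: m => [|m IH] k le_ik; first by rewrite addn0.
rewrite mulSn addnA => le_j.
have -> : f k = f (k + p) by apply: per_p; lia.
by apply: IH; lia.
Qed.

Lemma periodic_modn i j p x y : periodic i j p ->
  i <= x <= j -> i <= y <= j -> x = y %[mod p] -> f x = f y.
Proof.
move=> per_p; wlog le_xy : x y / x <= y => [hw Hx Hy eq_xy|Hx Hy eq_xy].
  case: (leqP x y) => [le_xy | /ltnW le_yx]; first exact: hw.
  by symmetry; apply: hw.
have p_dvd : p %| y - x by rewrite -eqn_mod_dvd // eq_xy.
have y_def : y = x + (y - x) %/ p * p by rewrite divnK // subnKC.
by rewrite y_def; apply: (periodic_mul per_p); rewrite -?y_def; lia.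
Qed.

Lemma periodic_win i j d a m : periodic i j d -> i <= a -> a + d + m <= j.+1 ->
  win (a + d) m = win a m.
Proof.
move=> per_d le_ia le_j; rewrite /win addnC iotaDl -map_comp.
apply/eq_in_map => k; rewrite mem_iota /= => Hk.
by rewrite addnC -per_d //; lia.
Qed.

Lemma win_rot i j p a k : periodic i j p -> i <= a -> k <= p -> a + k + p <= j.+1 ->
  win (a + k) p = rot k (win a p).
Proof.
move=> per_p le_ia le_kp le_j.
rewrite /rot drop_win take_win // -{1}(subnK le_kp) winD.
by rewrite (_ : a + k + (p - k) = a + p) ?(periodic_win per_p) //; lia.
Qed.

Lemma periodic_of_win_eq i j p a k : 0 < p -> periodic i j p -> i <= a ->
  a + k + p <= j.+1 -> win (a + k) p = win a p -> periodic i j k.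
Proof.
move=> p_gt0 per_p le_ia le_j eq_win t le_it le_tk.
(* s = (t - a) mod p, written without truncated subtraction *)
pose s := (t + a * p - a) %% p.
have lt_sp : s < p by rewrite ltn_pmod.
have a_s : a + s = t %[mod p].
  rewrite modnDmr (_ : a + _ = a * p + t) ?modnMDl //.
  by have := leq_pmulr a p_gt0; lia.
have eq_s : f (a + k + s) = f (a + s).
  by rewrite -(nth_win (f 0) (a + k) lt_sp) -(nth_win (f 0) a lt_sp) eq_win.
rewrite (periodic_modn per_p (_ : i <= t <= j) (_ : i <= a + s <= j)); try lia.
rewrite (periodic_modn per_p (_ : i <= t + k <= j) (_ : i <= a + k + s <= j)); try lia.
- by rewrite eq_s.
- by rewrite [in RHS]addnAC -modnDml -a_s modnDml.
Qed.
End Windows.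

Lemma periodic_comp_inj (X Y : Type) (c : X -> Y) (f : nat -> X) i j p :
  injective c -> periodic (c \o f) i j p <-> periodic f i j p.
Proof.
move=> c_inj; split=> per_p k le_ik le_kj; first exact/c_inj/per_p.
by rewrite /= per_p.
Qed.

Section LyndonWindows.
Variables (disp : Order.disp_t) (A : orderType disp) (f : nat -> A) (i j p : nat).
Hypotheses (p_gt0 : 0 < p) (per_p : periodic f i j p).

Lemma periodic_win_not_lyndon a m :
  i <= a -> p < m -> a + m <= j.+1 -> ~~ lyndon (win f a m).
Proof.
move=> le_ia lt_pm le_j.
have p_in : p \in iota 1 (size (win f a m)).-1 by rewrite size_win mem_iota; lia.
apply/negP => /allP /(_ p p_in); rewrite drop_win (periodic_win per_p) //; last lia.
have -> : win f a m = win f a (m - p) ++ win f (a + (m - p)) p.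
  by rewrite -winD subnK // ltnW.
by rewrite ltxi_cat_prefix.
Qed.

Lemma mismatch_win_not_lyndon a m : i <= a -> a + p <= j.+1 -> j.+1 < a + m ->
  (f j.+1 < f (j.+1 - p))%O -> ~~ lyndon (win f a m).
Proof.
move=> le_ia le_j lt_j lt_mismatch.
have p_in : p \in iota 1 (size (win f a m)).-1 by rewrite size_win mem_iota; lia.
apply/negP => /allP /(_ p p_in); rewrite drop_win.
set d := j.+1 - (a + p).
have [le_dm m_d a_d] :
    [/\ d <= m - p, m - p - d = (m - p - d).-1.+1 & a + d = j.+1 - p].
  by split; lia.
have -> : win f a m = win f a d ++ f (j.+1 - p) :: win f (j.+1 - p).+1 (m - d).-1.
  rewrite -{1}(subnKC (leq_trans le_dm (leq_subr p m))) winD a_d.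
  by rewrite (_ : m - d = (m - d).-1.+1); last lia.
have -> : win f (a + p) (m - p) = win f a d ++ f j.+1 :: win f j.+2 (m - p - d).-1.
  rewrite -{1}(subnKC le_dm) winD (periodic_win per_p le_ia); last lia.
  by rewrite m_d win_cons (_ : a + p + d = j.+1); last lia.
by rewrite ltxi_catl ltxi_cons (lt_geF lt_mismatch).
Qed.

Lemma lyndon_root_exists : 3 * p <= j - i + 1 ->
  (forall q, 0 < q < p -> ~ periodic f i j q) ->
  exists2 a, i < a <= i + p & lyndon (win f a p).
Proof.
move=> long_run p_min.
pose g (k : 'I_p) : seqlexi A := win f (i.+1 + k) p.
have [k0 _ g_min] := @arg_minP _ _ _ (Ordinal p_gt0) xpredT g isT.
set a := i.+1 + k0.
have a_range : i < a <= i + p by have := ltn_ord k0; lia.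
have win_min b : i < b < i + 2 * p -> ~~ (win f b p <lex win f a p).
  move=> b_range; rewrite -leNgt.
  have [le_b | lt_b] := leqP b (i + p).
    have lt_k : b - i.+1 < p by lia.
    by have := g_min (Ordinal lt_k) isT; rewrite /g /= subnKC; last lia.
  have lt_k : b - p - i.+1 < p by lia.
  have shift : win f (b - p + p) p = win f (b - p) p.
    by apply: (periodic_win per_p); lia.
  rewrite subnK in shift; last lia.
  by have := g_min (Ordinal lt_k) isT; rewrite /g /= subnKC ?shift; last lia.
have win_neq k : 0 < k < p -> win f (a + k) p != win f a p.
  move=> k_range; apply/eqP => eq_win; apply: (p_min k k_range).
  by apply: (periodic_of_win_eq p_gt0 per_p _ _ eq_win); lia.
exists a => //.
apply: lyndon_of_lt_rot => k; rewrite size_win => k_range.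
rewrite -(win_rot per_p); try lia.
by rewrite lt_neqAle eq_sym win_neq // leNgt win_min //; lia.
Qed.
End LyndonWindows.

Section RankCode.
Variable T : finType.

Definition rank_code (b : bool) (x : T) : int :=
  if b then (- Posz (enum_rank x))%R else Posz (enum_rank x).

Definition code_before (x y : T) : bool := (enum_rank y < enum_rank x)%N.

Lemma rank_code_inj b : injective (rank_code b).
Proof.
move=> x y; rewrite /rank_code.
by case: b => [/oppr_inj|] [] /val_inj; exact: enum_rank_inj.
Qed.

Lemma rank_code_negb b x y :
  (rank_code (~~ b) x < rank_code (~~ b) y)%R = (rank_code b y < rank_code b x)%R.
Proof. by case: b; rewrite /rank_code ?ltrN2. Qed.

Lemma rank_code_before x y : x != y ->
  (rank_code (code_before x y) x < rank_code (code_before x y) y)%R.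
Proof.
move=> neq_xy; rewrite /code_before /rank_code.
case: ltnP => [lt_yx | le_xy]; first by rewrite ltrN2 ltz_nat.
rewrite ltz_nat ltn_neqAle le_xy andbT.
by apply: contra neq_xy => /eqP/val_inj/enum_rank_inj ->.
Qed.
End RankCode.

Lemma head_filter (X : Type) (d : X) (P : pred X) s :
  head d (filter P s) = nth d s (find P s).
Proof. by elim: s => //= x s IH; case: (P x). Qed.

Section Letters.
Variables (T : finType) (u : seq T).

Lemma letter_eq_None k : (letter u k == None) = (k == 0) || (size u < k).
Proof.
case: k => [|k] //=; rewrite ltnS; case: leqP => [le_uk | lt_ku].
  by rewrite nth_default ?size_map.
apply/eqP => nth_None; have := mem_nth None (_ : k < size (map Some u)).
by rewrite nth_None size_map => /(_ lt_ku) /mapP[].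
Qed.

Lemma is_periodbP i j p : 0 < i -> 0 < p ->
  reflect (periodic (letter u) i j p) (is_periodb u i j p).
Proof.
move=> i_gt0 p_gt0; rewrite /is_periodb p_gt0; apply: (iffP allP) => per k.
  by move=> le_ik le_kj; apply/eqP/per; rewrite mem_index_iota; lia.
by rewrite mem_index_iota => k_range; apply/eqP/per; lia.
Qed.

Lemma periodP i j : 0 < i <= j -> [/\ 0 < period u i j,
  is_periodb u i j (period u i j) &
  forall q, 0 < q < period u i j -> ~~ is_periodb u i j q].
Proof.
move=> /andP[i_gt0 le_ij]; set s := iota 1 (j - i).+1; set P := is_periodb u i j.
have has_P : has P s.
  apply/hasP; exists (j - i).+1; first by rewrite mem_iota; lia.
  rewrite /P /is_periodb /=; have -> : j - (j - i).+1 = i.-1 by lia.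
  by rewrite prednK // /index_iota subnn.
have lt_find : find P s < size s by rewrite -has_find.
rewrite size_iota in lt_find.
have period_def : period u i j = (find P s).+1.
  by rewrite /period head_filter nth_iota.
split; first by rewrite period_def.
  by rewrite /period head_filter; exact: nth_find.
move=> q /andP[q_gt0 lt_q]; rewrite period_def in lt_q.
have lt_q1 : q.-1 < find P s by lia.
have := before_find (j - i).+1 lt_q1; rewrite nth_iota; last lia.
by rewrite add1n prednK // => ->.
Qed.
End Letters.

Section CubicRuns.
Variables (T : finType) (u : seq T).

(* Since letter u 0 and the letters past the end are None, the boundary cases
   of the maximality conditions of is_run become plain mismatches. *)
Variant cubic_run_spec i j p : Prop :=
  CubicRunSpec of 0 < i & j <= size u & 0 < p & 3 * p <= j - i + 1
    & periodic (letter u) i j p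
    & (forall q, 0 < q < p -> ~ periodic (letter u) i j q)
    & letter u i.-1 != letter u (i + p - 1)
    & letter u (j - p + 1) != letter u j.+1.

Lemma cubic_runP i j : is_cubic_run u i j -> cubic_run_spec i j (period u i j).
Proof.
case/andP => /and5P[i_gt0 le_ij le_ju _ /andP[left_max right_max]] cubic.
have [p_gt0 per_p p_min] := periodP u (introT andP (conj i_gt0 le_ij)).
set p := period u i j in p_gt0 per_p p_min cubic left_max right_max *.
have letter_p k : 0 < k <= size u -> letter u k != None.
  by rewrite letter_eq_None; lia.
constructor => //.
- exact/(is_periodbP u j i_gt0 p_gt0).
- move=> q /andP[q_gt0 lt_qp] /(is_periodbP u j i_gt0 q_gt0).
  by apply/negP/p_min; rewrite q_gt0.
- case: eqP left_max => [-> _ | _ //]; rewrite eq_sym letter_p //; lia.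
- case: eqP right_max => [-> _ | _ //].
  have /eqP -> : letter u (size u).+1 == None by rewrite letter_eq_None ltnSn orbT.
  by rewrite letter_p //; lia.
Qed.

Lemma cubic_run_overlap i j i' j' p a :
  cubic_run_spec i j p -> cubic_run_spec i' j' p ->
  i' < a -> a + p <= j.+1 -> i' <= i /\ j' <= j.
Proof.
case=> _ _ _ _ per_p _ _ right_max [_ _ _ _ per_p' _ left_max' _] lt_i'a le_j.
split; rewrite leqNgt; apply/negP => lt_ends.
  apply/(negP left_max')/eqP; rewrite (per_p i'.-1); [congr letter | |]; lia.
apply/(negP right_max)/eqP; rewrite (per_p' (j - p + 1)); [congr letter | |]; lia.
Qed.

Lemma cubic_run_eq i j i' j' p a : cubic_run_spec i j p -> cubic_run_spec i' j' p ->
  i < a -> i' < a -> a + p <= j.+1 -> a + p <= j'.+1 -> i = i' /\ j = j'.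
Proof.
move=> run run' lt_ia lt_i'a le_j le_j'.
have [] := cubic_run_overlap run run' lt_i'a le_j.
have [] := cubic_run_overlap run' run lt_ia le_j'.
lia.
Qed.

Definition run_code i j : bool :=
  code_before (letter u j.+1) (letter u (j.+1 - period u i j)).

Definition coded_letter i j : nat -> int := rank_code (run_code i j) \o letter u.

Definition lyndon_roots i j : {set 'I_(size u).+1} :=
  [set a : 'I_(size u).+1 | [&& i < a, a + period u i j <= j.+1 &
     lyndon (win (coded_letter i j) a (period u i j))]].

Lemma coded_letter_periodic i j i' j' q :
  periodic (coded_letter i j) i' j' q <-> periodic (letter u) i' j' q.
Proof. exact/periodic_comp_inj/rank_code_inj. Qed.

Lemma coded_letter_mismatch i j : cubic_run_spec i j (period u i j) ->
  (coded_letter i j j.+1 < coded_letter i j (j.+1 - period u i j))%R.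
Proof.
case=> _ _ _ cubic _ _ _ right_max; apply: rank_code_before.
by rewrite eq_sym (_ : j.+1 - _ = j - period u i j + 1) //; lia.
Qed.

Lemma lyndon_roots_card i j : is_cubic_run u i j ->
  (j - i + 1) %/ period u i j - 1 <= #|lyndon_roots i j|.
Proof.
move/cubic_runP => [_ le_ju p_gt0 cubic per_p p_min _ _].
set p := period u i j in p_gt0 cubic per_p p_min *; set f := coded_letter i j.
have f_per : periodic f i j p by apply/coded_letter_periodic.
have f_min q : 0 < q < p -> ~ periodic f i j q.
  by move/p_min; rewrite coded_letter_periodic.
have [a0 a0_range a0_lyndon] := lyndon_root_exists p_gt0 f_per cubic f_min.
set q := (j - i + 1) %/ p.
have qp_le : q * p <= j - i + 1 by rewrite leq_divM.
have root_range (m : 'I_(q - 1)) : i < a0 + m * p /\ a0 + m * p + p <= j.+1.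
  have : m.+2 * p <= q * p by rewrite leq_mul2r; have := ltn_ord m; lia.
  by rewrite !mulSn; lia.
pose root (m : 'I_(q - 1)) : 'I_(size u).+1 := inord (a0 + m * p).
have root_val m : root m = a0 + m * p :> nat.
  by rewrite inordK //; have [] := root_range m; lia.
have root_inj : injective root.
  move=> m m' /(congr1 val); rewrite /= !root_val => /addnI /eqP.
  by rewrite eqn_mul2r eqn0Ngt p_gt0 => /eqP /val_inj.
rewrite -[q - 1]card_ord -(card_imset _ root_inj).
apply/subset_leq_card/subsetP => _ /imsetP[m _ ->].
have [lt_i le_j] := root_range m.
rewrite inE root_val lt_i le_j (periodic_win (periodic_mul f_per)) //; lia.
Qed.

Lemma exponent_le_lyndon_roots i j : is_cubic_run u i j ->
  (exponent u i j <= 5%:R / 2%:R * #|lyndon_roots i j|%:R)%R.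
Proof.
move=> run; have card_ge := lyndon_roots_card run.
have [_ _ p_gt0 cubic _ _ _ _] := cubic_runP run.
set p := period u i j in p_gt0 cubic card_ge *; set L := j - i + 1 in cubic card_ge *.
have q_ge3 : 3 <= L %/ p by rewrite leq_divRL.
have lt_L : L < (L %/ p).+1 * p by rewrite ltn_ceil.
have bound : 2 * L <= 5 * #|lyndon_roots i j| * p.
  rewrite -mulnA; apply: leq_trans (_ : 5 * ((L %/ p - 1) * p) <= _); last first.
    by rewrite leq_mul2l leq_mul2r card_ge !orbT.
  by rewrite mulnBl mul1n; move: lt_L; rewrite mulSn; nia.
rewrite /exponent -/p -/L ler_pdivrMr ?ltr0n //.
have -> : (5%:R / 2%:R * #|lyndon_roots i j|%:R * p%:R
           = (5 * #|lyndon_roots i j| * p)%:R / 2%:R :> rat)%R by rewrite !natrM; field.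
by rewrite ler_pdivlMr ?ltr0n // -natrM ler_nat mulnC.
Qed.

Lemma lyndon_root_lt_pred i j (a : 'I_(size u).+1) : is_cubic_run u i j ->
  1 < period u i j -> a \in lyndon_roots i j ->
  (coded_letter i j a < coded_letter i j a.-1)%R.
Proof.
move/cubic_runP => [_ _ _ _ per_p _ _ _] p_gt1.
rewrite inE => /and3P[lt_ia le_j root_a].
set p := period u i j in p_gt1 per_p le_j root_a; set f := coded_letter i j in root_a *.
have f_per : periodic f i j p by apply/coded_letter_periodic.
rewrite (f_per a.-1); [|lia|lia].
apply/(@lyndon_first_lt_last _ _ _ (win f a.+1 (p - 2))); move: root_a.
rewrite -[X in win _ a X](_ : 1 + (p - 2) + 1 = p); last lia.
by rewrite !winD /= addn1 (_ : a + (1 + (p - 2)) = a.-1 + p); last lia.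
Qed.

Lemma lyndon_root_le_pred i j (a : 'I_(size u).+1) : is_cubic_run u i j ->
  a \in lyndon_roots i j -> (coded_letter i j a <= coded_letter i j a.-1)%R.
Proof.
move=> run root_a; have [p_gt1 | p_le1] := ltnP 1 (period u i j).
  exact/ltW/lyndon_root_lt_pred.
have [_ _ p_gt0 _ per_p _ _ _] := cubic_runP run.
move: root_a; rewrite inE => /and3P[lt_ia le_j _].
rewrite /coded_letter /= (per_p a.-1); [|lia|lia].
by rewrite (_ : a.-1 + period u i j = a); last lia.
Qed.

Lemma cubic_run_not_lyndon_longer i j a m : is_cubic_run u i j ->
  i <= a -> a + period u i j <= j.+1 -> period u i j < m ->
  ~~ lyndon (win (coded_letter i j) a m).
Proof.
move=> run; have mismatch := coded_letter_mismatch (cubic_runP run).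
have [_ _ p_gt0 _ per_p _ _ _] := cubic_runP run.
have f_per : periodic (coded_letter i j) i j (period u i j).
  by apply/coded_letter_periodic.
move=> le_ia le_j lt_pm; have [le_am | lt_am] := leqP (a + m) j.+1.
  exact: (periodic_win_not_lyndon p_gt0 f_per).
exact: (mismatch_win_not_lyndon p_gt0 f_per).
Qed.

Lemma lyndon_roots_period_eq i j i' j' (a : 'I_(size u).+1) :
  is_cubic_run u i j -> is_cubic_run u i' j' ->
  a \in lyndon_roots i j -> a \in lyndon_roots i' j' -> period u i j = period u i' j'.
Proof.
wlog lt_p : i j i' j' / period u i j < period u i' j'.
  move=> hw run run' root root'.
  case: (ltngtP (period u i j) (period u i' j')) => [lt_p | lt_p | //].
    exact: hw.
  by symmetry; apply: hw.
move=> run run' root root'; exfalso.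
have [_ _ p_gt0 _ _ _ _ _] := cubic_runP run.
have [eq_code | neq_code] := eqVneq (run_code i j) (run_code i' j').
  move: root root'; rewrite !inE => /and3P[lt_ia le_j _] /and3P[_ _].
  rewrite /coded_letter -eq_code -/(coded_letter i j).
  by apply/negP/(cubic_run_not_lyndon_longer run); lia.
have flip : run_code i' j' = ~~ run_code i j by move: neq_code; do 2!case: run_code.
have := lyndon_root_lt_pred run' (leq_ltn_trans p_gt0 lt_p) root'.
rewrite /coded_letter /= flip rank_code_negb => lt_flip.
by have := lyndon_root_le_pred run root; rewrite /coded_letter /= leNgt lt_flip.
Qed.

Lemma lyndon_roots_disjoint i j i' j' (a : 'I_(size u).+1) :
  is_cubic_run u i j -> is_cubic_run u i' j' ->
  a \in lyndon_roots i j -> a \in lyndon_roots i' j' -> i = i' /\ j = j'.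
Proof.
move=> run run' root root'; have eq_p := lyndon_roots_period_eq run run' root root'.
have run'_spec := cubic_runP run'; rewrite -eq_p in run'_spec.
move: root root'; rewrite !inE -eq_p => /and3P[lt_ia le_j _] /and3P[lt_i'a le_j' _].
exact: (cubic_run_eq (cubic_runP run) run'_spec lt_ia lt_i'a le_j le_j').
Qed.

Lemma sum_card_lyndon_roots :
  \sum_(x : 'I_(size u).+1 * 'I_(size u).+1 | is_cubic_run u x.1 x.2)
     #|lyndon_roots x.1 x.2| <= (size u).-1.
Proof.
under eq_bigr do rewrite -sum1_card.
rewrite (exchange_big_dep (fun a : 'I_(size u).+1 => 1 < a)) /=; last first.
  move=> x a run; have [i_gt0 _ _ _ _ _ _ _] := cubic_runP run.
  by rewrite inE => /and3P[lt_ia _ _]; lia.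
have -> : (size u).-1 = \sum_(a < (size u).+1 | 1 < a) 1.
  rewrite (eq_bigl (fun a : 'I__ => xpredT (a : nat) && (2 <= a))) //.
  by rewrite -(big_geq_mkord 2 _ xpredT (fun=> 1)) sum_nat_const_nat muln1; lia.
apply: leq_sum => a _; rewrite sum1dep_card.
apply/card_le1_eqP => [[i j] [i' j']].
rewrite [(i, j) \in _]in_set [(i', j') \in _]in_set.
move=> /andP[run root] /andP[run' root'].
by have [/val_inj /= -> /val_inj /= ->] := lyndon_roots_disjoint run run' root root'.
Qed.
End CubicRuns.

Theorem theorem3 (T : finType) (n : nat) (u : seq T) :
  0 < n -> size u = n -> (cubic_exp_sum u < 5%:R / 2%:R * n%:R)%R.
Proof.
move=> n_gt0 size_u; rewrite /cubic_exp_sum pair_big_dep /=.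
apply: le_lt_trans (ler_sum _ (fun x run => exponent_le_lyndon_roots run)) _.
rewrite -mulr_sumr -natr_sum.
apply: le_lt_trans (_ : _ <= 5%:R / 2%:R * (size u).-1%:R)%R _.
  by rewrite ler_wpM2l // ler_nat sum_card_lyndon_roots.
by rewrite ltr_pM2l // ltr_nat size_u prednK.
Qed.
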